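(* Let $n,g,k,p\in\mathbb N$. Define the following four sets. (1) $\widetilde a_{g,p}(n)$ is the set of fixed-point-free involutions $\pi$ of $[2n]$ such that $\#(\pi^{-1}1_{2n})=n+1-2g$, $\pi(a)$ is odd for every even $a\in[2n]$, and the restriction of $\pi^{-1}1_{2n}$ to the odd elements $\{1,3,\ldots,2n-1\}$ (which it preserves) has exactly $p$ cycles. Here $1_{2n}=(1,2,\ldots,2n)$. (2) On $\pm[2n]$ let $\tau_0=(1,-1)\cdots(2n,-2n)$, $\tau_2=(-1,2)(-2,3)\cdots(-2n,1)$, $B(n)=\{1,3,\ldots,2n-1\}\cup\{-2,-4,\ldots,-2n\}$ and $W(n)=\{2,4,\ldots,2n\}\cup\{-1,-3,\ldots,1-2n\}$. $\widetilde b_{k,p}(n)$ is the set of fixed-point-free involutions $\tau_1$ of $\pm[2n]$ such that $\#(\tau_2\tau_1)=2n+2-2k$, $\tau_0\tau_1=\tau_1\tau_0$, $\tau_0\tau_1$ is fixed-point free, there exists $a\in[2n]$ with $\tau_1(a)\in[2n]$, $\tau_1(B(n))\subseteq B(n)$, and the restriction of $\tau_2\tau_1$ to $W(n)$ (which it preserves) has exactly $2p$ cycles. (3) $\widehat a_{g,p}(n)$ is the set of permutations $\pi$ of $[n]$ with $\#(\pi)=p$ and $\#(\pi^{-1}1_n)=n-p+1-2g$, where $1_n=(1,\ldots,n)$. (4) On $\pm[n]$ let $\tau_0=(1,-1)\cdots(n,-n)$ and $\widetilde 1_n=(1,\ldots,n)(-n,\ldots,-1)$. $\widehat b_{k,p}(n)$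 is the set of permutations $\tau_1$ of $\pm[n]$ such that $\#(\tau_1)=2p$, $\#(\widetilde 1_n\tau_1)=2(n-p+1-k)$, $\tau_0\tau_1\tau_0=\tau_1^{-1}$, $\tau_0\tau_1$ is fixed-point free, and there exists $a\in[n]$ with $\tau_1(a)\in-[n]$. Then there are bijections $\widetilde a_{g,p}(n)\cong\widehat a_{g,p}(n)$ and $\widetilde b_{k,p}(n)\cong\widehat b_{k,p}(n)$.
   Context: Permutations are composed right to left, $(\sigma\rho)(x)=\sigma(\rho(x))$; $\#(\sigma)$ denotes the number of cycles of $\sigma$ including fixed points; $[m]=\{1,\ldots,m\}$, $-[m]=\{-1,\ldots,-m\}$, $\pm[m]=[m]\cup-[m]$. The sets in (1),(2) encode bipartite ribbon graphs (orientable of genus $g$, resp. non-orientable of Euler genus $k$) with $p$ white boundaries, and those in (3),(4) the corresponding combinatorial hypermaps. *)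

From mathcomp Require Import all_boot all_order all_fingroup.
Set Implicit Arguments. Unset Strict Implicit. Unset Printing Implicit Defensive.

(* Encoding conventions:
   [m] = {1..m} is represented by 'I_m, the ordinal i standing for i+1.
   Hence a in [m] is odd iff its ordinal i is even.
   +-[m] is represented by  bool * 'I_m : (false, i) stands for  i+1
   and (true, i) stands for -(i+1).
   Composition: paper's (sigma rho)(x) = sigma(rho x) is MathComp's (rho * sigma)
   since (s * t) x = t (s x) in perm.v.  *)

Definition pm (m : nat) : finType := (bool * 'I_m)%type.
Definition pos {m} (i : 'I_m) : pm m := (false, i).
Definition neg {m} (i : 'I_m) : pm m := (true, i).

Definition ncycles (T : finType) (s : {perm T}) : nat := #|porbits s|.
(* number of cycles of the restriction of s to a set S it preserves *)
Definition ncycles_on (T : finType) (s : {perm T}) (S : {set T}) : nat :=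
  #|[set porbit s x | x in S]|.

Definition fpf (T : finType) (s : {perm T}) : bool := [forall x, s x != x].
Definition fpf_invol (T : finType) (s : {perm T}) : bool := (s * s == 1)%g && fpf s.

Definition cyc (m : nat) : {perm 'I_m} := perm (@ordS_inj m).

Definition tau0_fun m (x : pm m) : pm m := (~~ x.1, x.2).
Lemma tau0_inj m : injective (@tau0_fun m).
Proof. by case=> b i [c j] /= [] /negb_inj -> ->. Qed.
Definition tau0 m : {perm pm m} := perm (@tau0_inj m).

(* tau_2 = (-1,2)(-2,3)...(-m,1):  -(i+1) <-> i+2 (mod m) *)
Definition tau2_fun m (x : pm m) : pm m :=
  if x.1 then pos (ordS x.2) else neg (ord_pred x.2).
Lemma tau2_K m : involutive (@tau2_fun m).
Proof. by case=> [[] i]; rewrite /tau2_fun /= ?ordSK ?ord_predK. Qed.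
Definition tau2 m : {perm pm m} := perm (inv_inj (@tau2_K m)).

Definition tcyc_fun m (x : pm m) : pm m :=
  if x.1 then neg (ord_pred x.2) else pos (ordS x.2).
Definition tcyc_inv m (x : pm m) : pm m :=
  if x.1 then neg (ordS x.2) else pos (ord_pred x.2).
Lemma tcyc_inj m : injective (@tcyc_fun m).
Proof.
apply: (can_inj (g := @tcyc_inv m)).
by case=> [[] i]; rewrite /tcyc_fun /tcyc_inv /= ?ordSK ?ord_predK.
Qed.
Definition tcyc m : {perm pm m} := perm (@tcyc_inj m).

(* B(n) = {1,3,..,2n-1} u {-2,..,-2n};  W(n) = {2,..,2n} u {-1,..,1-2n} *)
Definition Bset n : {set pm (2 * n)} := [set x : pm (2 * n) | odd x.2 == x.1].
Definition Wset n : {set pm (2 * n)} := [set x : pm (2 * n) | odd x.2 != x.1].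

Definition a_tilde (g p n : nat) : {set {perm 'I_(2 * n)}} :=
  [set pi | [&& fpf_invol pi,
             ncycles (cyc (2 * n) * pi^-1)%g + 2 * g == n + 1,
             [forall i : 'I_(2 * n), odd i ==> ~~ odd (pi i)] &
             ncycles_on (cyc (2 * n) * pi^-1)%g [set i : 'I_(2 * n) | ~~ odd i] == p]].

Definition b_tilde (k p n : nat) : {set {perm pm (2 * n)}} :=
  [set t1 | [&& fpf_invol t1,
             ncycles (t1 * tau2 (2 * n))%g + 2 * k == 2 * n + 2,
             (tau0 (2 * n) * t1 == t1 * tau0 (2 * n))%g,
             fpf (t1 * tau0 (2 * n))%g,
             [exists i : 'I_(2 * n), ~~ (t1 (pos i)).1],
             [forall x in Bset n, t1 x \in Bset n] &
             ncycles_on (t1 * tau2 (2 * n))%g (Wset n) == 2 * p]].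

Definition a_hat (g p n : nat) : {set {perm 'I_n}} :=
  [set pi | (ncycles pi == p) && (ncycles (cyc n * pi^-1)%g + p + 2 * g == n + 1)].

Definition b_hat (k p n : nat) : {set {perm pm n}} :=
  [set t1 | [&& ncycles t1 == 2 * p,
             ncycles (t1 * tcyc n)%g + 2 * p + 2 * k == 2 * n + 2,
             (tau0 n * t1 * tau0 n == t1^-1)%g,
             fpf (t1 * tau0 n)%g &
             [exists i : 'I_n, (t1 (pos i)).1]]].

From mathcomp Require Import all_boot all_order all_fingroup.
From mathcomp Require Import zify.
Set Implicit Arguments. Unset Strict Implicit. Unset Printing Implicit Defensive.

(* Both bijections keep half of an involution.  An involution pi in a_tilde
   pairs each even point 2j with an odd point 2 r(j) - 1, and the permutation
   r of [n] determines pi.  Transported by halving, pi^-1 1_(2n) acts on the odd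
   points as r and on the even points as r^-1 1_n, so its cycles split as
   #(r) + #(r^-1 1_n).
   Likewise tau1 in b_tilde preserves W(n), a copy of +-[n], together with
   B(n) = tau0 W(n); tau2 tau1 acts on W(n) as a permutation t and on B(n) as
   1~_n t.  The conditions that tau1 be a fixed-point-free involution commuting
   with tau0 become: tau0 t is a fixed-point-free involution, which is what
   tau0 t tau0 = t^-1 and "tau0 t is fixed-point free" say.  Finally tau1 maps
   some positive point to a positive one iff t changes the sign of some point,
   and a permutation maps a positive point to a negative one iff it maps a
   negative point to a positive one. *)

Section PermFacts.
Variable T : finType.
Implicit Types (s : {perm T}) (W : {set T}).

Definition mkperm (f : T -> T) : {perm T} :=
  if injectiveP f is ReflectT f_inj then perm f_inj else 1%g.

Lemma mkpermE f : injective f -> mkperm f =1 f.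
Proof. by rewrite /mkperm; case: injectiveP => // f_inj _ x; rewrite permE. Qed.

Lemma involP s : (s * s == 1)%g -> involutive s.
Proof. by move=> /eqP ss1 x; rewrite -permM ss1 perm1. Qed.

Lemma invol_invE s : (s * s == 1)%g -> s^-1%g =1 s.
Proof. by move=> /involP sK x; apply: (canLR (permK s)); rewrite sK. Qed.

Lemma perm_stable s (A : {pred T}) :
  {homo s : x / x \in A} -> forall x, (s x \in A) = (x \in A).
Proof.
move=> sA x; apply/esym/(@fclosed1 _ s).
apply: (intro_closed (fconnect_sym (@perm_inj _ s))) => y _ /eqP <-; exact: sA.
Qed.

Lemma perm_crosses s (A : {pred T}) x :
  x \notin A -> s x \in A -> exists2 y, y \in A & s y \notin A.
Proof.
move=> xA sxA; apply/exists_inP; apply: contraLR sxA => /exists_inPn sA.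
have sA' : {homo s : y / y \in A} by move=> y /sA; rewrite negbK.
by rewrite perm_stable.
Qed.

Lemma porbit_sub s W x :
  {homo s : y / y \in W} -> x \in W -> porbit s x \subset W.
Proof.
move=> sW xW; apply/subsetP=> _ /porbitP[i ->]; rewrite permX.
by elim: i => //= i; apply: sW.
Qed.

Lemma ncycles_split_on s W :
  {homo s : y / y \in W} -> ncycles s = ncycles_on s W + ncycles_on s (~: W).
Proof.
move=> sW; rewrite /ncycles /ncycles_on /porbits.
have -> : porbit s @: T = porbit s @: (W :|: ~: W).
  by apply/setP=> O; rewrite setUCr; apply/imsetP/imsetP => -[x _ ->]; exists x.
rewrite imsetU cardsU; set I := _ :&: _; suff -> : I = set0 by rewrite cards0 subn0.
apply/setP=> O; rewrite !inE; apply/negbTE/andP=> -[/imsetP[x xW ->] /imsetP[y yW]].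
move=> Exy; have : y \in porbit s x by rewrite Exy porbit_id.
by move/(subsetP (porbit_sub sW xW)); rewrite inE in yW; rewrite (negbTE yW).
Qed.

End PermFacts.

Lemma ncycles_on_conj (T U : finType) (s : {perm T}) (r : {perm U}) (h : U -> T) :
  injective h -> (forall u, s (h u) = h (r u)) ->
  ncycles_on s (h @: setT) = ncycles r.
Proof.
move=> h_inj hr; rewrite /ncycles_on /ncycles /porbits.
have h_porbit u : porbit s (h u) = h @: porbit r u.
  have hX i : (s ^+ i)%g (h u) = h ((r ^+ i)%g u).
    by rewrite !permX; elim: i => //= i ->; apply: hr.
  apply/setP=> y; apply/porbitP/imsetP => [[i ->]|[_ /porbitP[i ->] ->]].
    by exists ((r ^+ i)%g u); rewrite ?mem_porbit.
  by exists i.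
have -> : porbit s @: (h @: setT) = (fun A : {set U} => h @: A) @: (porbit r @: U).
  apply/setP=> O; apply/imsetP/imsetP => [[_ /imsetP[u _ ->] ->]|[_ /imsetP[u _ ->] ->]].
    by exists (porbit r u); rewrite ?h_porbit ?imset_f.
  by exists (h u); rewrite ?h_porbit ?imset_f.
by rewrite card_imset //; apply: imset_inj.
Qed.

Lemma bij_imset (T1 T2 : finType) (S : pred T1) (A : {set T1}) (B : {set T2})
    (f : T1 -> T2) :
  {subset A <= S} -> {in S &, injective f} ->
  {in S, forall x, (x \in A) = (f x \in B)} ->
  (forall y, y \in B -> exists2 x, S x & f x = y) ->
  {in A &, injective f} /\ f @: A = B.
Proof.
move=> AS f_inj fAB f_onto; split; first exact: sub_in2 f_inj.
apply/setP=> y; apply/imsetP/idP => [[x xA ->]|yB]; first by rewrite -fAB ?AS.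
by have [x Sx fxy] := f_onto y yB; exists x; rewrite ?fAB ?fxy.
Qed.

Lemma mulg_sandwich_eqV (gT : finGroupType) (t u : gT) :
  (u * t * u == t^-1)%g = (t * u * (t * u) == 1)%g.
Proof. by rewrite eq_sym eq_mulVg1 invgK !mulgA. Qed.

(* [ord_dbl i] and [ord_dblS i] stand for the points 2i+1 and 2i+2 of [2n]. *)
Section Doubling.
Variable n : nat.

Lemma ord_dbl_subproof (i : 'I_n) : 2 * i < 2 * n.
Proof. by case: i => /= i; lia. Qed.
Lemma ord_dblS_subproof (i : 'I_n) : 2 * i + 1 < 2 * n.
Proof. by case: i => /= i; lia. Qed.
Lemma ord_half_subproof (x : 'I_(2 * n)) : x %/ 2 < n.
Proof. by case: x => /= x; lia. Qed.

Definition ord_dbl i : 'I_(2 * n) := Ordinal (ord_dbl_subproof i).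
Definition ord_dblS i : 'I_(2 * n) := Ordinal (ord_dblS_subproof i).
Definition ord_half x : 'I_n := Ordinal (ord_half_subproof x).

Lemma ord_dblK : cancel ord_dbl ord_half.
Proof. by move=> i; apply: val_inj => /=; lia. Qed.
Lemma ord_dblSK : cancel ord_dblS ord_half.
Proof. by move=> i; apply: val_inj => /=; lia. Qed.
Lemma odd_ord_dbl i : odd (ord_dbl i) = false.
Proof. by rewrite /= oddM. Qed.
Lemma odd_ord_dblS i : odd (ord_dblS i) = true.
Proof. by rewrite /= addn1 /= oddM. Qed.
Lemma ord_halfK (x : 'I_(2 * n)) : ~~ odd x -> ord_dbl (ord_half x) = x.
Proof. by move=> ox; apply: val_inj => /=; move: ox; case: x => /= x _; lia. Qed.
Lemma ord_halfSK (x : 'I_(2 * n)) : odd x -> ord_dblS (ord_half x) = x.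
Proof. by move=> ox; apply: val_inj => /=; move: ox; case: x => /= x _; lia. Qed.
Lemma ord_dbl_inj : injective ord_dbl. Proof. exact: can_inj ord_dblK. Qed.
Lemma ord_dblS_inj : injective ord_dblS. Proof. exact: can_inj ord_dblSK. Qed.

Lemma ord_parityP (x : 'I_(2 * n)) :
  (x = ord_dbl (ord_half x) /\ odd x = false) \/ (x = ord_dblS (ord_half x) /\ odd x = true).
Proof. by case: (boolP (odd x)) => ox; [right | left]; rewrite ?ord_halfK ?ord_halfSK. Qed.

Lemma ordS_dbl i : ordS (ord_dbl i) = ord_dblS i.
Proof. by apply: val_inj => /=; rewrite modn_small //; case: i => /= i; lia. Qed.

Lemma ordS_dblS i : ordS (ord_dblS i) = ord_dbl (ordS i).
Proof.
apply: val_inj => /=; case: i => /= i lt_in.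
have [lt_Sn|le_nS] := ltnP i.+1 n; first by rewrite !modn_small //; lia.
have -> : i.+1 = n by lia.
by rewrite (_ : _.+1 = 2 * n) ?modnn //; lia.
Qed.

Lemma ord_pred_dblS i : ord_pred (ord_dblS i) = ord_dbl i.
Proof. by rewrite -ordS_dbl ordSK. Qed.
Lemma ord_pred_dbl i : ord_pred (ord_dbl i) = ord_dblS (ord_pred i).
Proof. by rewrite -{1}(ord_predK i) -ordS_dblS ordSK. Qed.

Lemma cyc_dbl i : cyc (2 * n) (ord_dbl i) = ord_dblS i.
Proof. by rewrite permE ordS_dbl. Qed.
Lemma cyc_dblS i : cyc (2 * n) (ord_dblS i) = ord_dbl (cyc n i).
Proof. by rewrite !permE ordS_dblS. Qed.

Lemma even_ords : [set x : 'I_(2 * n) | ~~ odd x] = ord_dbl @: setT.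
Proof.
apply/setP=> x; rewrite inE; apply/idP/imsetP => [ox|[i _ ->]]; last by rewrite odd_ord_dbl.
by exists (ord_half x); rewrite ?ord_halfK.
Qed.

Lemma odd_ords : ~: [set x : 'I_(2 * n) | ~~ odd x] = ord_dblS @: setT.
Proof.
apply/setP=> x; rewrite !inE negbK; apply/idP/imsetP => [ox|[i _ ->]]; last exact: odd_ord_dblS.
by exists (ord_half x); rewrite ?ord_halfSK.
Qed.

End Doubling.

Section ATilde.
Variable n : nat.
Implicit Types (pi : {perm 'I_(2 * n)}) (r : {perm 'I_n}).

Definition parity_swapping_invol pi :=
  fpf_invol pi && [forall x : 'I_(2 * n), odd x ==> ~~ odd (pi x)].

Definition a_hat_of pi : {perm 'I_n} := mkperm (fun i => ord_half (pi (ord_dblS i))).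

Definition a_tilde_fun r (x : 'I_(2 * n)) : 'I_(2 * n) :=
  if odd x then ord_dbl (r (ord_half x)) else ord_dblS (r^-1%g (ord_half x)).

Lemma a_tilde_funK r : involutive (a_tilde_fun r).
Proof.
move=> x; rewrite {2}/a_tilde_fun; case: ifP => ox; rewrite /a_tilde_fun.
  by rewrite odd_ord_dbl ord_dblK permK ord_halfSK.
by rewrite odd_ord_dblS ord_dblSK permKV ord_halfK ?ox.
Qed.

Lemma odd_a_tilde_fun r x : odd (a_tilde_fun r x) = ~~ odd x.
Proof. by rewrite /a_tilde_fun; case: ifP; rewrite ?odd_ord_dbl ?odd_ord_dblS. Qed.

Definition a_tilde_of r : {perm 'I_(2 * n)} := perm (inv_inj (a_tilde_funK r)).

Section ParitySwapping.
Variable pi : {perm 'I_(2 * n)}.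
Hypothesis pi_swap : parity_swapping_invol pi.

Lemma a_hat_ofE i : pi (ord_dblS i) = ord_dbl (a_hat_of pi i).
Proof.
have odd_pi (x : 'I_(2 * n)) : odd x -> ~~ odd (pi x).
  by move: pi_swap => /andP[_ /forallP/(_ x)/implyP].
rewrite mkpermE ?ord_halfK ?odd_pi ?odd_ord_dblS // => j k /(congr1 (@ord_dbl n)).
by rewrite !ord_halfK ?odd_pi ?odd_ord_dblS // => /perm_inj/ord_dblS_inj.
Qed.

Lemma a_hat_ofVE j : pi (ord_dbl j) = ord_dblS ((a_hat_of pi)^-1%g j).
Proof.
move: pi_swap => /andP[/andP[/involP piK _] _].
by rewrite -{1}(permKV (a_hat_of pi) j) -a_hat_ofE piK.
Qed.

Lemma cyc_piV_dbl i :
  (cyc (2 * n) * pi^-1)%g (ord_dbl i) = ord_dbl (a_hat_of pi i).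
Proof.
move: pi_swap => /andP[/andP[piI _] _].
by rewrite permM cyc_dbl invol_invE // a_hat_ofE.
Qed.

Lemma cyc_piV_dblS i :
  (cyc (2 * n) * pi^-1)%g (ord_dblS i) = ord_dblS ((cyc n * (a_hat_of pi)^-1)%g i).
Proof.
move: pi_swap => /andP[/andP[piI _] _].
by rewrite !permM cyc_dblS invol_invE // a_hat_ofVE.
Qed.

Lemma ncycles_cyc_piV :
  ncycles (cyc (2 * n) * pi^-1)%g = ncycles (a_hat_of pi) + ncycles (cyc n * (a_hat_of pi)^-1)%g.
Proof.
rewrite (ncycles_split_on (W := [set x : 'I_(2 * n) | ~~ odd x])); last first.
  by move=> x; rewrite even_ords => /imsetP[i _ ->]; rewrite cyc_piV_dbl imset_f.
rewrite odd_ords even_ords (ncycles_on_conj (@ord_dbl_inj n) cyc_piV_dbl).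
by rewrite (ncycles_on_conj (@ord_dblS_inj n) cyc_piV_dblS).
Qed.

Lemma a_tilde_hat_mem g p : (pi \in a_tilde g p n) = (a_hat_of pi \in a_hat g p n).
Proof.
move: (pi_swap) => /andP[piI pi_par]; rewrite !inE piI pi_par ncycles_cyc_piV.
rewrite even_ords (ncycles_on_conj (@ord_dbl_inj n) cyc_piV_dbl) /=.
by case: (ncycles (a_hat_of pi) =P p) => [->|_]; rewrite ?andbF ?andbT // (addnC p).
Qed.

End ParitySwapping.

Lemma a_tilde_of_swap r : parity_swapping_invol (a_tilde_of r).
Proof.
have odd_a x : odd (a_tilde_of r x) = ~~ odd x by rewrite permE odd_a_tilde_fun.
apply/andP; split; [apply/andP; split|].
- by apply/eqP/permP=> x; rewrite permM perm1 !permE a_tilde_funK.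
- by apply/forallP=> x; apply/eqP => ax; move: (odd_a x); rewrite ax; case: odd.
- by apply/forallP=> x; rewrite odd_a; apply/implyP => ->.
Qed.

Lemma a_hat_of_tilde r : a_hat_of (a_tilde_of r) = r.
Proof.
apply/permP=> i; apply: ord_dbl_inj.
by rewrite -a_hat_ofE ?a_tilde_of_swap // permE /a_tilde_fun odd_ord_dblS ord_dblSK.
Qed.

Lemma a_hat_of_inj : {in parity_swapping_invol &, injective a_hat_of}.
Proof.
move=> pi pi' S S' E; apply/permP=> x.
by case: (ord_parityP x) => -[-> _]; rewrite ?a_hat_ofE ?a_hat_ofVE // E.
Qed.

End ATilde.

Lemma a_tilde_hat_bij n g p : exists f : {perm 'I_(2 * n)} -> {perm 'I_n},
  {in a_tilde g p n &, injective f} /\ f @: a_tilde g p n = a_hat g p n.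
Proof.
exists (@a_hat_of n); apply: (bij_imset (S := @parity_swapping_invol n)).
- by move=> pi; rewrite inE => /and4P[piI _ pi_par _]; apply/andP.
- exact: a_hat_of_inj.
- by move=> pi pi_swap; apply: a_tilde_hat_mem.
- by move=> r _; exists (a_tilde_of r); rewrite ?a_tilde_of_swap ?a_hat_of_tilde.
Qed.

Lemma tau0E m (x : pm m) : tau0 m x = (~~ x.1, x.2).
Proof. by rewrite permE. Qed.
Lemma tau0K m : involutive (tau0 m).
Proof. by case=> b i; rewrite !tau0E /= negbK. Qed.
Lemma tau2E m (x : pm m) : tau2 m x = tau2_fun x.
Proof. by rewrite permE. Qed.
Lemma tau2K m : involutive (tau2 m).
Proof. by move=> x; rewrite !tau2E tau2_K. Qed.
Lemma tcycE m (x : pm m) : tcyc m x = tcyc_fun x.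
Proof. by rewrite permE. Qed.

Section WhiteCopy.
Variable n : nat.
Implicit Types (x : pm (2 * n)) (y : pm n).

(* [a |-> -(2a-1)] and [-a |-> 2a] identify +-[n] with W(n). *)
Definition toW y : pm (2 * n) :=
  if y.1 then pos (ord_dblS y.2) else neg (ord_dbl y.2).
Definition ofW x : pm n := (~~ x.1, ord_half x.2).

Lemma toWK : cancel toW ofW.
Proof. by case=> [[] i]; rewrite /toW /ofW /= ?ord_dblK ?ord_dblSK. Qed.
Lemma toW_inj : injective toW.
Proof. exact: can_inj toWK. Qed.
Lemma toW_sign y : (toW y).1 = ~~ y.1.
Proof. by case: y => [[] i]. Qed.
Lemma toW_W y : toW y \in Wset n.
Proof. by case: y => [[] i]; rewrite inE /= ?odd_ord_dbl ?odd_ord_dblS. Qed.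
Lemma ofWK x : x \in Wset n -> toW (ofW x) = x.
Proof.
case: x => [[] j]; rewrite inE /toW /ofW /=;
  by case: (boolP (odd j)) => //= oj _; rewrite ?ord_halfK ?ord_halfSK.
Qed.

Lemma Wset_toW : Wset n = toW @: setT.
Proof.
apply/setP=> x; apply/idP/imsetP => [xW|[y _ ->]]; last exact: toW_W.
by exists (ofW x); rewrite ?ofWK.
Qed.

Lemma Wset_Bset x : (x \in Wset n) = (x \notin Bset n).
Proof. by rewrite !inE. Qed.

Lemma tau0_W x : (tau0 (2 * n) x \in Wset n) = (x \notin Wset n).
Proof. by rewrite tau0E !inE /=; case: x.1; case: odd. Qed.

Lemma setCW_tau0_toW : ~: Wset n = (fun y => tau0 (2 * n) (toW y)) @: setT.
Proof.
apply/setP=> x; rewrite inE -tau0_W Wset_toW; apply/imsetP/imsetP => -[y _ Ey].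
  by exists y; rewrite // -Ey tau0K.
by exists y; rewrite // Ey tau0K.
Qed.

Lemma tau2_toW y : tau2 (2 * n) (toW y) = toW (tau0 n y).
Proof.
by case: y => [[] i]; rewrite tau2E tau0E /tau2_fun /toW /= ?ord_pred_dblS ?ordS_dbl.
Qed.

Lemma tau2_W x : (tau2 (2 * n) x \in Wset n) = (x \in Wset n).
Proof.
case: x => [[] j]; case: (ord_parityP j) => -[-> _];
  rewrite tau2E /tau2_fun !inE /pos /neg; cbn [fst snd];
  by rewrite ?ordS_dbl ?ordS_dblS ?ord_pred_dbl ?ord_pred_dblS ?odd_ord_dbl ?odd_ord_dblS.
Qed.

Lemma tau2_tau0_tau2_toW y :
  tau2 (2 * n) (tau0 (2 * n) (tau2 (2 * n) (toW y))) = tau0 (2 * n) (toW (tcyc n y)).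
Proof.
case: y => [[] i]; rewrite !tau2E !tau0E tcycE /tcyc_fun /tau2_fun /toW /=.
  by rewrite ord_pred_dblS ord_pred_dbl.
by rewrite ordS_dbl ordS_dblS.
Qed.

Lemma toW_caseP x : (exists y, x = toW y) \/ (exists y, x = tau0 (2 * n) (toW y)).
Proof.
case: (boolP (x \in Wset n)) => xW; first by left; exists (ofW x); rewrite ofWK.
by right; exists (ofW (tau0 _ x)); rewrite ofWK ?tau0K ?tau0_W.
Qed.

End WhiteCopy.

Section BTilde.
Variable n : nat.
Implicit Types (t : {perm pm n}).

Definition colour_invol (t1 : {perm pm (2 * n)}) :=
  [&& fpf_invol t1, (tau0 (2 * n) * t1 == t1 * tau0 (2 * n))%g &
      [forall x in Bset n, t1 x \in Bset n]].

Definition b_hat_of (t1 : {perm pm (2 * n)}) : {perm pm n} :=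
  mkperm (fun y => ofW (tau2 (2 * n) (t1 (toW y)))).

Section ColourInvol.
Variable t1 : {perm pm (2 * n)}.
Hypothesis t1_col : colour_invol t1.

Lemma colour_involK : involutive t1.
Proof. by case/and3P: t1_col => /andP[/involP]. Qed.
Lemma colour_invol_tau0 x : t1 (tau0 (2 * n) x) = tau0 (2 * n) (t1 x).
Proof. by case/and3P: t1_col => _ /eqP/permP/(_ x); rewrite !permM. Qed.
Lemma colour_invol_fpf x : t1 x != x.
Proof. by case/and3P: t1_col => /andP[_ /forallP]. Qed.
Lemma colour_invol_W x : (t1 x \in Wset n) = (x \in Wset n).
Proof.
rewrite !Wset_Bset perm_stable // => y; case/and3P: t1_col => _ _ /forall_inP; apply.
Qed.

Lemma b_hat_ofE y : tau2 (2 * n) (t1 (toW y)) = toW (b_hat_of t1 y).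
Proof.
have inW z : tau2 (2 * n) (t1 (toW z)) \in Wset n by rewrite tau2_W colour_invol_W toW_W.
rewrite mkpermE ?ofWK // => z z' /(congr1 (@toW n)); rewrite !ofWK //.
by move/perm_inj/perm_inj/toW_inj.
Qed.

Lemma colour_invol_toW y : t1 (toW y) = toW ((b_hat_of t1 * tau0 n)%g y).
Proof. by rewrite permM -tau2_toW -b_hat_ofE tau2K. Qed.

Lemma b_hat_of_tau0_invol : fpf_invol (b_hat_of t1 * tau0 n)%g.
Proof.
apply/andP; split.
  apply/eqP/permP=> y; apply: toW_inj.
  by rewrite perm1 permM -!colour_invol_toW colour_involK.
apply/forallP=> y; apply: contra_neq (colour_invol_fpf (toW y)) => uy.
by rewrite colour_invol_toW uy.
Qed.

Lemma colour_invol_tau0_fpf : fpf (t1 * tau0 (2 * n))%g.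
Proof.
apply/forallP=> x; rewrite permM; apply/eqP => t1x.
by move: (colour_invol_W x); rewrite -{2}t1x tau0_W; case: (_ \in _).
Qed.

Lemma t1_tau2_toW y :
  (t1 * tau2 (2 * n))%g (toW y) = toW (b_hat_of t1 y).
Proof. by rewrite permM b_hat_ofE. Qed.

Lemma t1_tau2_tau0_toW y :
  (t1 * tau2 (2 * n))%g (tau0 (2 * n) (toW y)) =
  tau0 (2 * n) (toW ((b_hat_of t1 * tcyc n)%g y)).
Proof.
rewrite !permM colour_invol_tau0 -tau2_tau0_tau2_toW; congr (tau2 _ (tau0 _ _)).
by rewrite -b_hat_ofE tau2K.
Qed.

Lemma ncycles_on_t1_tau2_W :
  ncycles_on (t1 * tau2 (2 * n))%g (Wset n) = ncycles (b_hat_of t1).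
Proof. by rewrite Wset_toW (ncycles_on_conj (@toW_inj n) t1_tau2_toW). Qed.

Lemma ncycles_t1_tau2 :
  ncycles (t1 * tau2 (2 * n))%g = ncycles (b_hat_of t1) + ncycles (b_hat_of t1 * tcyc n)%g.
Proof.
rewrite (ncycles_split_on (W := Wset n)); last first.
  by move=> x xW; rewrite permM tau2_W colour_invol_W.
rewrite ncycles_on_t1_tau2_W setCW_tau0_toW (ncycles_on_conj _ t1_tau2_tau0_toW) //.
by move=> y y' /(congr1 (tau0 _)); rewrite !tau0K => /toW_inj.
Qed.

Lemma colour_invol_sign y : (t1 (toW y)).1 = (b_hat_of t1 y).1.
Proof. by rewrite colour_invol_toW toW_sign permM tau0E negbK. Qed.

Lemma colour_invol_exists :
  [exists i : 'I_(2 * n), ~~ (t1 (pos i)).1] = [exists i : 'I_n, (b_hat_of t1 (pos i)).1].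
Proof.
have sign_dbl i : (t1 (pos (ord_dbl i))).1 = ~~ (b_hat_of t1 (pos i)).1.
  have -> : pos (ord_dbl i) = tau0 (2 * n) (toW (pos i)) by rewrite tau0E.
  by rewrite colour_invol_tau0 tau0E colour_invol_sign.
have sign_dblS i : (t1 (pos (ord_dblS i))).1 = (b_hat_of t1 (neg i)).1.
  by rewrite -colour_invol_sign.
apply/existsP/existsP => [[j]|[i t_i]]; last by exists (ord_dbl i); rewrite sign_dbl negbK.
case: (ord_parityP j) => -[-> _]; first by rewrite sign_dbl negbK; exists (ord_half j).
rewrite sign_dblS => tpos.
have [y ypos tyneg] :=
  perm_crosses (A := [pred y : pm n | ~~ y.1]) (x := neg (ord_half j)) isT tpos.
by exists y.2; case: y ypos tyneg => [[] i] // _; rewrite inE negbK.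
Qed.

Lemma b_tilde_hat_mem k p : (t1 \in b_tilde k p n) = (b_hat_of t1 \in b_hat k p n).
Proof.
have /andP[uI uF] := b_hat_of_tau0_invol.
move: (t1_col) => /and3P[t1I t1c t1B].
rewrite !inE t1I t1c t1B colour_invol_tau0_fpf colour_invol_exists mulg_sandwich_eqV uI uF.
rewrite ncycles_t1_tau2 ncycles_on_t1_tau2_W /=.
case: (ncycles (b_hat_of t1) =P 2 * p) => [->|_]; rewrite ?andbF //= andbT.
by rewrite (addnC (2 * p)).
Qed.

End ColourInvol.

Definition b_tilde_fun t (x : pm (2 * n)) : pm (2 * n) :=
  if x \in Wset n then toW ((t * tau0 n)%g (ofW x))
  else tau0 (2 * n) (toW ((t * tau0 n)%g (ofW (tau0 (2 * n) x)))).

Definition b_tilde_of t : {perm pm (2 * n)} := mkperm (b_tilde_fun t).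

Section TwistedInvol.
Variable t : {perm pm n}.
Hypothesis t_tau0 : fpf_invol (t * tau0 n)%g.

Lemma b_tilde_fun_toW y : b_tilde_fun t (toW y) = toW ((t * tau0 n)%g y).
Proof. by rewrite /b_tilde_fun toW_W toWK. Qed.

Lemma b_tilde_fun_tau0 x : b_tilde_fun t (tau0 (2 * n) x) = tau0 (2 * n) (b_tilde_fun t x).
Proof. by rewrite /b_tilde_fun tau0_W tau0K; case: (_ \in _); rewrite ?tau0K. Qed.

Lemma b_tilde_funK : involutive (b_tilde_fun t).
Proof.
have uK := involP (proj1 (andP t_tau0)).
by move=> x; case: (toW_caseP x) => -[y ->]; rewrite ?b_tilde_fun_tau0 !b_tilde_fun_toW uK.
Qed.

Lemma b_tilde_ofE : b_tilde_of t =1 b_tilde_fun t.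
Proof. exact/mkpermE/inv_inj/b_tilde_funK. Qed.

Lemma b_tilde_of_colour : colour_invol (b_tilde_of t).
Proof.
have b_W y : b_tilde_fun t (toW y) \in Wset n by rewrite b_tilde_fun_toW toW_W.
apply/and3P; split; [apply/andP; split| |].
- by apply/eqP/permP=> x; rewrite permM perm1 !b_tilde_ofE b_tilde_funK.
- apply/forallP=> x; rewrite b_tilde_ofE.
  case: (toW_caseP x) => -[y ->]; rewrite ?b_tilde_fun_tau0 b_tilde_fun_toW;
    by rewrite ?(inj_eq perm_inj) (inj_eq (@toW_inj n)); case/andP: t_tau0 => _ /forallP.
- by apply/eqP/permP=> x; rewrite !permM !b_tilde_ofE b_tilde_fun_tau0.
- apply/forall_inP=> x; rewrite b_tilde_ofE; apply: contraLR; rewrite -!Wset_Bset.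
  by case: (toW_caseP x) => -[y ->]; rewrite ?b_tilde_fun_tau0 ?tau0_W b_W toW_W.
Qed.

Lemma b_hat_of_tilde : b_hat_of (b_tilde_of t) = t.
Proof.
apply/permP=> y; apply: toW_inj.
by rewrite -b_hat_ofE ?b_tilde_of_colour // b_tilde_ofE b_tilde_fun_toW tau2_toW permM tau0K.
Qed.

End TwistedInvol.

Lemma b_hat_of_inj : {in colour_invol &, injective b_hat_of}.
Proof.
move=> t1 t1' col col' E; apply/permP=> x.
case: (toW_caseP x) => -[y ->]; rewrite ?(colour_invol_tau0 col) ?(colour_invol_tau0 col');
  by rewrite (colour_invol_toW col) (colour_invol_toW col') E.
Qed.

End BTilde.

Lemma b_tilde_hat_bij n k p : exists f : {perm pm (2 * n)} -> {perm pm n},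
  {in b_tilde k p n &, injective f} /\ f @: b_tilde k p n = b_hat k p n.
Proof.
exists (@b_hat_of n); apply: (bij_imset (S := @colour_invol n)).
- by move=> t1; rewrite inE => /and4P[t1I _ t1c /and4P[_ _ t1B _]]; apply/and3P.
- exact: b_hat_of_inj.
- by move=> t1 t1_col; apply: b_tilde_hat_mem.
- move=> t; rewrite inE => /and5P[_ _ t_conj t_fpf _].
  have t_tau0 : fpf_invol (t * tau0 n)%g by rewrite /fpf_invol -mulg_sandwich_eqV t_conj.
  by exists (b_tilde_of t); rewrite ?b_tilde_of_colour ?b_hat_of_tilde.
Qed.

Theorem lemma2 (n g k p : nat) :
  (exists f : {perm 'I_(2 * n)} -> {perm 'I_n},
      {in a_tilde g p n &, injective f} /\ f @: a_tilde g p n = a_hat g p n) /\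
  (exists f : {perm pm (2 * n)} -> {perm pm n},
      {in b_tilde k p n &, injective f} /\ f @: b_tilde k p n = b_hat k p n).
Proof. split; [exact: a_tilde_hat_bij | exact: b_tilde_hat_bij]. Qed.
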